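(* Let $A$ be a stationary, co-stationary subset of $\omega_1$, let $T$ be the tree of all countable closed (compact in the order topology of $\omega_1$) subsets of $A$ ordered by $s\le t$ iff $s$ is an initial part of $t$, and let $P(T)$ be the set of all paths of $T$ (downward closed linearly ordered subsets of $T$), viewed as a subspace of $2^T$ via characteristic functions. Then $P(T)$ is a Corson compactum, and the square $P(T)\times P(T)$ is not $nwd$-separable (hence not $d$-separable).
   Context: A Corson compactum is a compact space embeddable in $\Sigma(\mathbb{R}^\kappa)=\{x\in\mathbb{R}^\kappa:|\{\alpha:x(\alpha)\neq0\}|\le\omega\}$ for some cardinal $\kappa$. A space is $d$-separable if it has a dense subset which is a countable union of discrete subspaces; it is $nwd$-separable if it has a dense subset which is a countable union of nowhere dense subsets. *)

From HB Require Import structures.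
From mathcomp Require Import all_boot all_order all_algebra.
From mathcomp Require Import all_classical all_reals all_analysis.
From mathcomp Require Import Rstruct Rstruct_topology.
From Stdlib Require Import Rdefinitions.
Set Implicit Arguments. Unset Strict Implicit. Unset Printing Implicit Defensive.
Import Order.TTheory GRing.Theory Num.Theory.
Local Open Scope classical_set_scope.
Local Open Scope order_scope.

(* W is (order-isomorphic to) omega_1: a well-ordered, uncountable totally
   ordered type all of whose proper initial segments are countable. *)
Definition is_omega1 (d : Order.disp_t) (W : orderType d) : Prop :=
  well_founded (fun x y : W => x < y) /\
  ~ countable [set: W] /\
  (forall a : W, countable [set x : W | x < a]).

(* open interval (lo, hi) of the order topology, None = unbounded end *)
Definition in_oint (d : Order.disp_t) (W : orderType d)
    (lo hi : option W) (x : W) : Prop :=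
  (match lo with None => True | Some l => l < x end) /\
  (match hi with None => True | Some h => x < h end).

Definition ord_closed (d : Order.disp_t) (W : orderType d) (s : set W) : Prop :=
  forall a : W, ~ s a -> exists lo hi : option W,
    in_oint lo hi a /\ forall x, in_oint lo hi x -> ~ s x.

Definition club (d : Order.disp_t) (W : orderType d) (C : set W) : Prop :=
  (forall a : W, exists2 b, C b & a <= b) /\ ord_closed C.

Definition stationary (d : Order.disp_t) (W : orderType d) (A : set W) : Prop :=
  forall C : set W, club C -> A `&` C !=set0.

Definition co_stationary (d : Order.disp_t) (W : orderType d) (A : set W) : Prop :=
  stationary (~` A).

Definition node (d : Order.disp_t) (W : orderType d) (A : set W) :=
  {s : set W | s `<=` A /\ countable s /\ ord_closed s}.

Definition tree_le (d : Order.disp_t) (W : orderType d) (A : set W)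
    (s t : node A) : Prop :=
  proj1_sig s `<=` proj1_sig t /\
  forall x y, proj1_sig s x -> proj1_sig t y -> y <= x -> proj1_sig s y.

Definition is_path (d : Order.disp_t) (W : orderType d) (A : set W)
    (p : set (node A)) : Prop :=
  (forall s t, p t -> tree_le s t -> p s) /\
  (forall s t, p s -> p t -> tree_le s t \/ tree_le t s).

Definition charf (d : Order.disp_t) (W : orderType d) (A : set W)
    (p : set (node A)) : {ptws node A -> bool} :=
  fun t => `[< p t >].

Definition paths_space (d : Order.disp_t) (W : orderType d) (A : set W)
    : set {ptws node A -> bool} :=
  [set f | exists2 p, is_path p & f = charf p].

Definition Sigma_prod (I : Type) : set {ptws I -> R} :=
  [set x | countable [set i | x i <> 0%R]].

(* X (with the subspace topology) is a Corson compactum: compact and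
   homeomorphic to a subspace of Sigma(R^I) for some index set I *)
Definition corson_compact (S : topologicalType) (X : set S) : Prop :=
  compact X /\
  exists (I : Type) (f : S -> {ptws I -> R}),
    {in X &, injective f} /\
    f @` X `<=` @Sigma_prod I /\
    {within X, continuous f} /\
    exists g : {ptws I -> R} -> S,
      {within f @` X, continuous g} /\ (forall x, X x -> g (f x) = x).

Definition dense_in (S : topologicalType) (X D : set S) : Prop :=
  D `<=` X /\ X `<=` closure D.

(* N is nowhere dense in the subspace X: the interior (relative to X) of the
   closure (relative to X) of N is empty *)
Definition nowhere_dense_in (S : topologicalType) (X N : set S) : Prop :=
  N `<=` X /\
  forall U : set S, open U -> U `&` X `<=` closure N -> U `&` X = set0.

Definition discrete_subspace (S : topologicalType) (D : set S) : Prop :=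
  forall x, D x -> exists U : set S, open U /\ U x /\ U `&` D = [set x].

Definition nwd_separable (S : topologicalType) (X : set S) : Prop :=
  exists N : nat -> set S,
    (forall n, nowhere_dense_in X (N n)) /\ dense_in X (\bigcup_n N n).

Definition d_separable (S : topologicalType) (X : set S) : Prop :=
  exists D : nat -> set S,
    (forall n, D n `<=` X /\ discrete_subspace (D n)) /\ dense_in X (\bigcup_n D n).

Arguments paths_space {d W} A.
Arguments charf {d W A} p.

(* Every path of T is countable: its union is bounded, for otherwise it would
   be a club inside A, against co-stationarity, and a bounded set has only
   countably many initial segments. Hence the characteristic functions of
   paths, a closed subset of the compact space 2^T, sit inside Sigma(R^T).
   Near a path, P(T) contains the cone of all paths through some node above a
   prescribed one. A nowhere dense or discrete subset of P(T) x P(T) can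
   therefore be avoided by a product of cones above any given pair of nodes.
   Given countably many such sets, a fusion sequence of pairs of nodes avoiding
   them one after the other has an upper bound, because its supremum can be
   chosen in the stationary set A (closure points of a bounding function form a
   club); the pair of downsets of that bound has a neighbourhood missing all of
   the sets, so their union is not dense. *)

From HB Require Import structures.
From mathcomp Require Import all_boot all_order all_algebra.
From mathcomp Require Import all_classical all_reals all_analysis.
From mathcomp Require Import Rstruct_topology lra.
Set Implicit Arguments. Unset Strict Implicit. Unset Printing Implicit Defensive.
Import Order.TTheory numFieldNormedType.Exports.
Local Open Scope order_scope.
Local Open Scope classical_set_scope.

Lemma countableU T (A B : set T) : countable A -> countable B -> countable (A `|` B).
Proof.
move=> cA cB; have -> : A `|` B = \bigcup_(b in [set: bool]) (if b then A else B).
  apply/seteqP; split => [x [Ax|Bx]|x [[] _ ?]];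
    [exists true|exists false|left|right] => //.
by apply: bigcup_countable => // -[].
Qed.

Lemma countable_subset T (A B : set T) : countable A -> B `<=` A -> countable B.
Proof. by move=> cA /subset_card_le /sub_countable; apply. Qed.

Lemma countable_image T U (f : T -> U) (A : set T) : countable A -> countable (f @` A).
Proof. by apply: sub_countable; exact: card_image_le. Qed.

Lemma countable_enum T (A : set T) : countable A -> A !=set0 ->
  exists2 e : nat -> T, forall n, A (e n) & forall x, A x -> exists n, e n = x.
Proof.
move=> /pfcard_geP[->|/surjfunPex[e eA] _]; first by case=> x [].
exists e => [n|x]; first by rewrite eA; exists n.
by rewrite eA => -[n _ <-]; exists n.
Qed.

Section Omega1.
Variables (d : Order.disp_t) (W : orderType d).
Hypothesis W_omega1 : is_omega1 W.
Implicit Types (a b c g : W) (U s t : set W).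

Lemma omega1_min (P : W -> Prop) :
  (exists x, P x) -> exists2 m, P m & forall y, P y -> m <= y.
Proof.
case: W_omega1 => wf _ [x Px]; elim/(well_founded_ind wf): x Px => x IH Px.
have [[y [Py yx]]|min_x] := pselect (exists y, P y /\ y < x); first exact: IH Py.
by exists x => // y Py; rewrite leNgt; apply/negP => yx; apply: min_x; exists y.
Qed.

Lemma countable_lt a : countable [set x | x < a].
Proof. by case: W_omega1 => _ []. Qed.

Lemma countable_le a : countable [set x | x <= a].
Proof.
apply: (countable_subset (countableU (countable_lt a) (countable1 a))) => x /=.
by rewrite le_eqVlt => /orP[/eqP->|]; [right|left].
Qed.

Lemma countable_ub (S : set W) : countable S -> exists b, forall x, S x -> x < b.
Proof.
move=> cS; pose L := \bigcup_(x in S) [set y | y <= x].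
have [b Lb] : exists b, ~ L b.
  have cL : countable L by apply: bigcup_countable => // x _; exact: countable_le.
  case: W_omega1 => _ [uncW _]; apply: contra_notP uncW => allL.
  by apply: (countable_subset cL) => y _; apply: contra_notP allL => nLy; exists y.
by exists b => x Sx; rewrite ltNge; apply/negP => bx; apply: Lb; exists x.
Qed.

Lemma omega1_inhabited : inhabited W.
Proof.
case: W_omega1 => _ [uncW _]; apply: contra_notP uncW => nW.
by apply: (countable_subset (@countable0 W)) => x _; exact: nW (inhabits x).
Qed.

Lemma omega1_succ b : exists c, forall y, (y < c) = (y <= b).
Proof.
have [c bc] := countable_ub (countable1 b).
have [m bm min_m] := @omega1_min (fun y => b < y) (ex_intro _ c (bc b erefl)).
exists m => y; apply/idP/idP => [ym|yb]; last exact: le_lt_trans yb bm.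
by rewrite leNgt; apply/negP => /min_m; rewrite leNgt ym.
Qed.

Lemma club_gt b : club [set x | b < x].
Proof.
split=> [a|a /negP]; last rewrite -leNgt => ab.
  have [c ac] := countable_ub (countableU (countable1 a) (countable1 b)).
  by exists c; [apply: ac; right|apply/ltW/ac; left].
have [c hc] := omega1_succ b.
exists None, (Some c); split => [|x [_ /=]]; first by split => //=; rewrite hc.
by rewrite hc leNgt => /negP.
Qed.

Lemma stationary_unbounded (A : set W) : stationary A -> forall b, exists2 a, A a & b < a.
Proof. by move=> A_stat b; have [a [Aa ba]] := A_stat _ (club_gt b); exists a. Qed.

Lemma club_closure_points (h : W -> W) (w0 : W) :
  club [set a | w0 < a /\ forall g, g < a -> h g < a].
Proof.
split=> [a|a not_cl].
  have /choice [H hH] : forall c, exists e, forall g, g <= c -> h g < e.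
    move=> c; have [e he] := countable_ub (countable_image h (countable_le c)).
    by exists e => g gc; apply: he; exists g.
  have [c0 hc0] := countable_ub (countableU (countable1 a) (countable1 w0)).
  pose c := fix c k := if k is k'.+1 then H (c k') else c0.
  have [ub hub] := countable_ub (countable_image c (countableP [set: nat])).
  have [sup sup_ub sup_min] := @omega1_min (fun b => forall k, c k <= b)
    (ex_intro _ ub (fun k => ltW (hub _ (ex_intro2 _ _ k I erefl)))).
  exists sup; last exact: le_trans (ltW (hc0 a (or_introl erefl))) (sup_ub 0%N).
  split=> [|g g_sup]; first exact: lt_le_trans (hc0 w0 (or_intror erefl)) (sup_ub 0%N).
  have [k gk] : exists k, g < c k.
    apply: contrapT => ngk; move: g_sup; rewrite ltNge => /negP; apply.
    by apply: sup_min => k; rewrite leNgt; apply/negP => gk; apply: ngk; exists k.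
  exact: lt_le_trans (hH _ _ (ltW gk)) (sup_ub k.+1).
have [w0a|] := boolP (w0 < a); last rewrite -leNgt => aw0.
  have [g ga nhg] : exists2 g, g < a & ~ h g < a.
    apply: contrapT => nex; apply: not_cl; split => // g ga.
    by apply: contrapT => nh; apply: nex; exists g.
  have [c hc] := omega1_succ (h g).
  exists (Some g), (Some c); split => [|x [/= gx]].
    by split => //=; rewrite hc leNgt; apply/negP.
  by rewrite hc => xhg [_ /(_ g gx)]; rewrite ltNge xhg.
have [c hc] := omega1_succ w0.
exists None, (Some c); split => [|x [_ /=]]; first by split => //=; rewrite hc.
by rewrite hc leNgt => /negP + [].
Qed.

Lemma in_oint_shrink (lo hi : option W) b e : in_oint lo hi b -> b < e ->
  exists hi', in_oint lo hi' b /\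
    forall x, in_oint lo hi' x -> in_oint lo hi x /\ x < e.
Proof.
case: hi => [h|] [blo bh] be.
  exists (Some (Order.min h e)); split; first by split => //=; rewrite lt_min bh be.
  by move=> x [xlo /=]; rewrite lt_min => /andP[xh xe].
by exists (Some e); split => // x [xlo /= xe].
Qed.

Lemma ord_closedU1 s a : ord_closed s -> (forall x, s x -> x < a) ->
  ord_closed (s `|` [set a]).
Proof.
move=> s_cl sa b nb.
have [nsb nba] : ~ s b /\ b <> a by split => h; apply: nb; [left|right].
case: (ltgtP a b) => [ab|ba|ab]; last by case: nba.
  exists (Some a), None; split => // x [/= ax _] [/sa|xa]; first by rewrite ltNge (ltW ax).
  by move: ax; rewrite xa ltxx.
have [lo [hi [bi hi_s]]] := s_cl _ nsb.
have [hi' [bi' hi'_hi]] := in_oint_shrink bi ba.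
exists lo, hi'; split => // x /hi'_hi[xi xa] [/(hi_s _ xi)//|xa'].
by move: xa; rewrite xa' ltxx.
Qed.

Definition initial_segment s U := s `<=` U /\ forall x y, s x -> U y -> y <= x -> s y.

Lemma initial_segment_refl U : initial_segment U U.
Proof. by split. Qed.

Lemma initial_segment_trans s t U :
  initial_segment s t -> initial_segment t U -> initial_segment s U.
Proof.
move=> [st s_init] [tU t_init]; split => [x /st /tU //|x y sx Uy yx].
exact: s_init sx (t_init _ _ (st _ sx) Uy yx) yx.
Qed.

Lemma initial_segment_total s t U : initial_segment s U -> initial_segment t U ->
  initial_segment s t \/ initial_segment t s.
Proof.
move=> [sU s_init] [tU t_init].
have [st|/existsNP[x /not_implyP[sx ntx]]] := pselect (s `<=` t).
  by left; split => // x y sx ty; exact: s_init sx (tU _ ty).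
right; split => [y ty|y z ty sz zy]; last exact: t_init ty (sU _ sz) zy.
have [yx|xy] := leP y x; first exact: s_init sx (tU _ ty) yx.
by case: ntx; exact: t_init ty (sU _ sx) (ltW xy).
Qed.

Lemma ord_closed_chain_sup (s : nat -> set W) dl : (forall k, ord_closed (s k)) ->
  (forall j k, (j <= k)%N -> initial_segment (s j) (s k)) ->
  (forall k x, s k x -> x < dl) -> (forall x, x < dl -> exists k y, s k y /\ x < y) ->
  ord_closed (\bigcup_(k in [set: nat]) s k `|` [set dl]).
Proof.
move=> s_cl mono bnd cof b nb.
have nsb k : ~ s k b by move=> skb; apply: nb; left; exists k.
have nbd : b <> dl by move=> bd; apply: nb; right.
case: (ltgtP dl b) => [db|bd|db]; last by case: nbd.
  exists (Some dl), None; split => // x [/= dx _] [[k _ /bnd xd]|xd].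
    by move: (lt_trans dx xd); rewrite ltxx.
  by move: dx; rewrite xd ltxx.
have [k [y [sky by']]] := cof _ bd.
have [lo [hi [bi hi_s]]] := s_cl k _ (nsb k).
have [hi' [bi' hi'_hi]] := in_oint_shrink bi by'.
exists lo, hi'; split => // x /hi'_hi[xi xy] [[j _ sjx]|xd].
  apply: (hi_s _ xi); have [jk|kj] := leqP j k; first exact: (mono _ _ jk).1.
  exact: (mono _ _ (ltnW kj)).2 _ _ sky sjx (ltW xy).
by move: (lt_trans xy (bnd _ _ sky)); rewrite xd ltxx.
Qed.

Lemma countable_initial_segments U b : (forall x, U x -> x < b) ->
  countable [set s | initial_segment s U].
Proof.
move=> Ub; apply: (countable_subset (countableU (countable1 U)
  (countable_image (fun m => U `&` [set x | x < m]) (countable_lt b)))).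
move=> s [sU s_init]; have [Us|] := pselect (U `<=` s).
  by left; apply/seteqP; split.
move=> /existsNP[x /not_implyP[Ux nsx]]; right.
have [m [Um nsm] min_m] := @omega1_min (fun y => U y /\ ~ s y) (ex_intro _ x (conj Ux nsx)).
exists m; first exact: Ub.
apply/seteqP; split => [y [Uy ym]|y sy].
  by apply: contrapT => nsy; move: (min_m y (conj Uy nsy)); rewrite leNgt ym.
split; first exact: sU.
by rewrite /= ltNge; apply/negP => my; exact: nsm (s_init _ _ sy Um my).
Qed.

Section Run.
Variables (P : Type) (step : nat -> P -> W -> P) (u0 : P).

Fixpoint run (e : nat -> W) k : P :=
  if k is k'.+1 then step k' (run e k') (e k') else u0.

Fixpoint reach k g : set P :=
  if k is k'.+1 then (fun t : nat * P * W => step t.1.1 t.1.2 t.2) @`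
    (([set: nat] `*` reach k' g) `*` [set b | b <= g])
  else [set u0].

Lemma countable_reach k g : countable (reach k g).
Proof.
elim: k => [|k IH] /=; first exact: countable1.
by apply/countable_image/countableX; [exact: countableX|exact: countable_le].
Qed.

Lemma run_reach e k g : (forall n, (n < k)%N -> e n <= g) -> reach k g (run e k).
Proof.
elim: k => [//|k IH] eg /=; exists (k, run e k, e k) => //.
by split; [split => //; apply: IH => n /leqW|]; apply: eg.
Qed.

(* [dl] is a closure point of a function bounding everything reachable with
   parameters at most a given ordinal. *)
Lemma stationary_run (A : set W) (o : P -> set W) :
  stationary A -> (forall u, countable (o u)) ->
  exists dl (e : nat -> W), [/\ A dl, forall n, e n < dl,
    forall x, x < dl -> exists n, e n = x & forall k x, o (run e k) x -> x < dl].
Proof.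
move=> A_stat co.
have /choice [h hh] : forall g, exists b, forall k u x, reach k g u -> o u x -> x < b.
  move=> g; have [|b hb] := @countable_ub (\bigcup_(k in [set: nat])
      \bigcup_(u in reach k g) o u).
    apply: bigcup_countable => // k _.
    by apply: (bigcup_countable (countable_reach k g)) => u _; exact: co.
  by exists b => k u x ru ox; apply: hb; exists k => //; exists u.
have [w0] := omega1_inhabited.
have [dl [Adl [w0dl h_dl]]] := A_stat _ (club_closure_points h w0).
have [e e_dl e_onto] := countable_enum (countable_lt dl) (ex_intro _ w0 w0dl).
exists dl, e; split => // k.
have [g gdl eg] : exists2 g, g < dl & forall n, (n < k)%N -> e n <= g.
  elim: k => [|k [g gdl eg]]; first by exists w0.
  exists (Order.max g (e k)); first by rewrite gt_max gdl e_dl.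
  move=> n; rewrite ltnS leq_eqVlt => /orP[/eqP->|/eg ng]; rewrite le_max ?lexx ?orbT //.
  by rewrite ng.
by move=> x /(hh g _ _ _ (run_reach eg)) /lt_trans; apply; exact: h_dl.
Qed.

End Run.
End Omega1.

Section Tree.
Variables (d : Order.disp_t) (W : orderType d) (A : set W).
Hypothesis W_omega1 : is_omega1 W.
Hypothesis A_stationary : stationary A.
Hypothesis A_costationary : co_stationary A.
Implicit Types (s t : node A) (p : set (node A)).

Lemma node_inj : injective (sval : node A -> set W).
Proof. by move=> [s hs] [t ht] /= st; subst t; congr exist; exact: Prop_irrelevance. Qed.

Lemma node_subset s : sval s `<=` A.
Proof. by case: s => s /= []. Qed.

Lemma node_countable s : countable (sval s).
Proof. by case: s => s /= [_ []]. Qed.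

Lemma node_closed s : ord_closed (sval s).
Proof. by case: s => s /= [_ []]. Qed.

Lemma node_ub s : exists b, forall x, sval s x -> x < b.
Proof. exact: (countable_ub W_omega1 (node_countable s)). Qed.

Lemma node0_subproof : set0 `<=` A /\ countable (@set0 W) /\ ord_closed (@set0 W).
Proof.
split; first exact: sub0set.
by split => // a _; exists None, None; split => [|x _ []].
Qed.

Definition node0 : node A := exist _ set0 node0_subproof.

Lemma tree_le_refl s : tree_le s s.
Proof. exact: initial_segment_refl. Qed.

Lemma tree_le_trans s t (u : node A) : tree_le s t -> tree_le t u -> tree_le s u.
Proof. exact: initial_segment_trans. Qed.

Lemma tree_le_total s t (u : node A) :
  tree_le s u -> tree_le t u -> tree_le s t \/ tree_le t s.
Proof. exact: initial_segment_total. Qed.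

Lemma node_extend s b : exists t a, [/\ tree_le s t, sval t = sval s `|` [set a],
  b < a & forall x, sval s x -> x < a].
Proof.
have [c sc] := node_ub s.
have [e ce] := countable_ub W_omega1 (countableU (countable1 c) (countable1 b)).
have [a Aa ea] := stationary_unbounded W_omega1 A_stationary e.
have [ca ba] : c < a /\ b < a by split; apply: lt_trans ea; apply: ce; [left|right].
have sa x : sval s x -> x < a by move=> /sc xc; exact: lt_trans xc ca.
have t_node : sval s `|` [set a] `<=` A /\ countable (sval s `|` [set a]) /\
    ord_closed (sval s `|` [set a]).
  split; first by move=> x [/node_subset|->].
  by split; [exact: (countableU (node_countable s) (countable1 a))|
             exact: (ord_closedU1 (@node_closed s) sa)].
exists (exist _ (sval s `|` [set a]) t_node : node A), a; split => //.
split => [x sx|x y sx [//|->] ax]; first by left.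
by move: (sa _ sx); rewrite ltNge ax.
Qed.

Lemma node_extend_incomparable s : exists t1 t2,
  [/\ tree_le s t1, tree_le s t2 & ~ tree_le t1 t2 /\ ~ tree_le t2 t1].
Proof.
have [b _] := node_ub s.
have [t1 [a1 [st1 t1E _ sa1]]] := node_extend s b.
have [t2 [a2 [st2 t2E a12 sa2]]] := node_extend s a1.
have not_le t t' a a' : sval t = sval s `|` [set a] -> sval t' = sval s `|` [set a'] ->
    (forall x, sval s x -> x < a) -> a != a' -> ~ tree_le t t'.
  move=> tE t'E sa aa' [tt' _]; have : sval t' a by apply: tt'; rewrite tE; right.
  by rewrite t'E => -[/sa|/eqP]; rewrite ?ltxx // (negbTE aa').
exists t1, t2; split => //; split.
  by apply: not_le t1E t2E sa1 _; rewrite lt_eqF.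
by apply: not_le t2E t1E sa2 _; rewrite gt_eqF.
Qed.

Lemma node_chain_ub (s : nat -> node A) dl : A dl ->
  (forall j k, (j <= k)%N -> tree_le (s j) (s k)) ->
  (forall k x, sval (s k) x -> x < dl) ->
  (forall x, x < dl -> exists k y, sval (s k) y /\ x < y) ->
  exists L : node A, forall k, tree_le (s k) L.
Proof.
move=> Adl mono bnd cof; pose L := \bigcup_(k in [set: nat]) sval (s k) `|` [set dl].
have L_node : L `<=` A /\ countable L /\ ord_closed L.
  split; first by move=> x [[k _ /node_subset]|->].
  split; last exact: ord_closed_chain_sup (fun k => @node_closed (s k)) mono bnd cof.
  apply: countableU (countable1 dl).
  by apply: bigcup_countable => // k _; exact: node_countable.
exists (exist _ L L_node) => k; split => [x skx|x y skx [[j _ sjy]|->] yx].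
- by left; exists k.
- have [jk|kj] := leqP j k; first exact: (mono _ _ jk).1.
  exact: (mono _ _ (ltnW kj)).2 _ _ skx sjy yx.
- by move: (le_lt_trans yx (bnd _ _ skx)); rewrite ltxx.
Qed.

Definition pair_le (u v : node A * node A) := tree_le u.1 v.1 /\ tree_le u.2 v.2.

Lemma pair_le_trans (u v w : node A * node A) : pair_le u v -> pair_le v w -> pair_le u w.
Proof. by move=> [? ?] [? ?]; split; apply: tree_le_trans; eassumption. Qed.

Lemma pair_extend_above (D : node A * node A -> Prop) :
  (forall u v, pair_le u v -> D u -> D v) -> (forall u, exists2 v, pair_le u v & D v) ->
  forall u b, exists v, [/\ pair_le u v, D v, exists2 x, sval v.1 x & b < x
    & exists2 x, sval v.2 x & b < x].
Proof.
move=> D_up D_dense u b; have [v uv Dv] := D_dense u.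
have [t1 [a1 [vt1 t1E ba1 _]]] := node_extend v.1 b.
have [t2 [a2 [vt2 t2E ba2 _]]] := node_extend v.2 b.
exists (t1, t2); split;
  [exact: pair_le_trans uv _|exact: D_up Dv|exists a1|exists a2] => //=.
- by rewrite t1E; right.
- by rewrite t2E; right.
Qed.

(* The fusion sequence is a run of [stationary_run]; adding its supremum
   [dl \in A] closes off both coordinates. *)
Lemma pair_fusion (D : nat -> node A * node A -> Prop) :
  (forall n u v, pair_le u v -> D n u -> D n v) ->
  (forall n u, exists2 v, pair_le u v & D n v) ->
  forall u0, exists2 v, pair_le u0 v & forall n, D n v.
Proof.
move=> D_up D_dense u0.
have /choice [step stepP] : forall t : nat * (node A * node A) * W, exists v,
    [/\ pair_le t.1.2 v, D t.1.1 v, exists2 x, sval v.1 x & t.2 < x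
      & exists2 x, sval v.2 x & t.2 < x].
  by move=> [[n u] b]; exact: pair_extend_above (D_up n) (D_dense n) u b.
pose G n u b := step (n, u, b).
have [dl [e [Adl e_dl e_onto run_dl]]] := @stationary_run _ _ W_omega1 _ G u0 A
  (fun u => sval u.1 `|` sval u.2) A_stationary
  (fun u => countableU (node_countable u.1) (node_countable u.2)).
pose u := run G u0 e.
have u_mono j k : (j <= k)%N -> pair_le (u j) (u k).
  move=> jk; rewrite -(subnKC jk); elim: (k - j)%N => [|n IH].
    by rewrite addn0; split; exact: tree_le_refl.
  by rewrite addnS; have [uv _ _ _] := stepP (j + n, u (j + n), e (j + n))%N;
    exact: pair_le_trans IH uv.
have cof1 x : x < dl -> exists k y, sval (u k).1 y /\ x < y.
  by move=> /e_onto[n <-]; have [_ _ [y ? ?] _] := stepP (n, u n, e n); exists n.+1, y.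
have cof2 x : x < dl -> exists k y, sval (u k).2 y /\ x < y.
  by move=> /e_onto[n <-]; have [_ _ _ [y ? ?]] := stepP (n, u n, e n); exists n.+1, y.
have [L1 uL1] := node_chain_ub Adl (fun j k jk => (u_mono j k jk).1)
  (fun k x ux => run_dl k x (or_introl ux)) cof1.
have [L2 uL2] := node_chain_ub Adl (fun j k jk => (u_mono j k jk).2)
  (fun k x ux => run_dl k x (or_intror ux)) cof2.
exists (L1, L2); first exact: (conj (uL1 0%N) (uL2 0%N)).
move=> n; apply: (D_up n (u n.+1)); first exact: (conj (uL1 n.+1) (uL2 n.+1)).
by have [_ ? _ _] := stepP (n, u n, e n).
Qed.

Lemma path_node_initial p s : is_path p -> p s ->
  initial_segment (sval s) (\bigcup_(t in p) sval t).
Proof.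
move=> [_ p_lin] ps; split => [x sx|x y sx [t pt ty] yx]; first by exists s.
by case: (p_lin _ _ ps pt) => [[_ s_init]|[ts _]]; [exact: s_init sx ty yx|exact: ts].
Qed.

(* An unbounded union of a path would be a club inside [A]. *)
Lemma path_union_bounded p : is_path p ->
  exists b, forall x, (\bigcup_(t in p) sval t) x -> x < b.
Proof.
move=> p_path; set U := \bigcup_(t in p) sval t.
apply: contrapT => /forallNP unbdd.
have U_cof a : exists2 x, U x & a < x.
  have [c ac] := countable_ub W_omega1 (countable1 a).
  have /existsNP[x /not_implyP[Ux nxc]] := unbdd c.
  by exists x => //; apply: lt_le_trans (ac a erefl) _; rewrite leNgt; exact/negP.
have U_club : club U.
  split => [a|a nUa]; first by have [x Ux /ltW ax] := U_cof a; exists x.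
  have [b [t pt tb] ab] := U_cof a.
  have nta : ~ sval t a by move=> ta; apply: nUa; exists t.
  have [lo [hi [ai hi_t]]] := node_closed nta.
  have [hi' [ai' hi'_hi]] := in_oint_shrink ai ab.
  exists lo, hi'; split => // x /hi'_hi[xi xb] Ux.
  exact: hi_t xi ((path_node_initial p_path pt).2 _ _ tb Ux (ltW xb)).
have [x [nAx [t _ tx]]] := A_costationary U_club.
exact: nAx (node_subset tx).
Qed.

Lemma path_countable p : is_path p -> countable p.
Proof.
move=> p_path; have [b Ub] := path_union_bounded p_path.
rewrite -(eq_countable (inj_card_eq (in2W node_inj))).
apply: (countable_subset (countable_initial_segments W_omega1 Ub)) => _ [s ps <-].
exact: path_node_initial.
Qed.

End Tree.

Lemma ptws_cvg (I Y : Type) (T : topologicalType) (G : set_system Y)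
    (g : Y -> {ptws I -> T}) (f : {ptws I -> T}) :
  Filter G -> (forall i, (fun y => g y i) @ G --> f i) -> g @ G --> f.
Proof.
move=> FG gf; apply/cvg_sup => i U [/= _ [[V oV <-] Vf]] /filterS; apply.
exact/gf/open_nbhs_nbhs.
Qed.

(* Otherwise the counterexamples would form a filter converging to [f]. *)
Lemma nbhs_ptws_agree (I : eqType) (T : topologicalType) (f : {ptws I -> T})
    (P : set {ptws I -> T}) :
  nbhs f P -> exists L : seq I, forall g, {in L, g =1 f} -> P g.
Proof.
move=> Pf; apply: contrapT => /forallNP noL.
pose B (L : seq I) := [set g : {ptws I -> T} | ~ P g /\ {in L, g =1 f}].
have B_filter : Filter (filter_from [set: seq I] B).
  apply: filter_fromT_filter; first by exists [::].
  move=> L1 L2; exists (L1 ++ L2) => g [nPg gf].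
  by split; split => // i iL; apply: gf; rewrite mem_cat iL ?orbT.
have : (fun g => g) @ filter_from [set: seq I] B --> f.
  apply: ptws_cvg => i U /nbhs_singleton Ufi.
  by exists [:: i] => // g [_ gf]; rewrite /= gf // mem_seq1.
move=> /(_ _ Pf) [L _ BP]; have /existsNP[g /not_implyP[gL nPg]] := noL L.
exact: nPg (BP _ (conj nPg gL)).
Qed.

Lemma nbhs_coord (I : eqType) (f : {ptws I -> bool}) i : nbhs f [set g | g i = f i].
Proof.
have /(_ [set f i]) := @proj_continuous I (fun _ => bool) i f.
apply; by move=> ? ->.
Qed.

Lemma open_coord_pair (I J : eqType) i j :
  open [set z : {ptws I -> bool} * {ptws J -> bool} | z.1 i /\ z.2 j].
Proof.
rewrite openE => z [zi zj].
exists ([set g | g i = z.1 i], [set g | g j = z.2 j]); first by split; exact: nbhs_coord.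
by move=> [g h] [/= -> ->].
Qed.

Lemma near_lt_const (R : realType) (c r : R) :
  r != c -> \forall r' \near r, (c < r') = (c < r).
Proof.
case: (ltgtP r c) => // [rc|cr] _.
  apply: filterS (open_nbhs_nbhs (conj (@open_lt _ c) rc)) => r' /= r'c.
  by rewrite ltNge (ltW r'c).
by apply: filterS (open_nbhs_nbhs (conj (@open_gt _ c) cr)) => r' /= ->.
Qed.

Section Paths_space.
Variables (d : Order.disp_t) (W : orderType d) (A : set W).
Hypothesis W_omega1 : is_omega1 W.
Hypothesis A_stationary : stationary A.
Hypothesis A_costationary : co_stationary A.
Implicit Types (s t : node A).

HB.instance Definition _ := gen_eqMixin (node A).

Local Notation X := (paths_space A).
Local Notation F := {ptws node A -> bool}.

Lemma paths_spaceE (f : F) : X f <-> is_path [set t | f t].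
Proof.
split=> [[p [p_down p_lin] ->]|f_path]; last first.
  by exists [set t | f t] => //; apply: funext => t; rewrite /charf asboolb.
split=> [s t /asboolP pt st|s t /asboolP ps /asboolP pt]; last exact: p_lin.
by apply/asboolP; exact: p_down pt st.
Qed.

Lemma paths_space_closed : closed X.
Proof.
move=> f clf; have agree2 s t : exists2 g, X g & g s = f s /\ g t = f t.
  by have [g [Xg gst]] := clf _ (filterI (nbhs_coord f s) (nbhs_coord f t)); exists g.
apply/paths_spaceE; split => [s t ft st|s t fs ft].
  have [g /paths_spaceE[g_down _] [gs gt]] := agree2 s t.
  by rewrite /= -gs; apply: g_down st; rewrite /= gt.
have [g /paths_spaceE[_ g_lin] [gs gt]] := agree2 s t.
by apply: g_lin; rewrite /= ?gs ?gt.
Qed.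

Lemma paths_space_compact : compact X.
Proof.
apply: (subclosed_compact paths_space_closed
  (@tychonoff (node A) (fun _ => bool) (fun _ => setT) (fun _ => bool_compact))).
by [].
Qed.

Definition cone s : set F := [set f | X f /\ f s].

Definition downset s : F := charf [set t | tree_le t s].

Lemma downset_cone s : cone s (downset s).
Proof.
split; last exact/asboolP/tree_le_refl.
exists [set t | tree_le t s] => //.
split=> [u t /= ts ut|u t /= us ts]; first exact: tree_le_trans ut ts.
exact: tree_le_total us ts.
Qed.

Lemma cone_le s t : tree_le s t -> cone t `<=` cone s.
Proof.
move=> st f [Xf ft]; split => //.
by have /paths_spaceE[f_down _] := Xf; exact: f_down ft st.
Qed.

Lemma path_max_in (f : F) (L : seq (node A)) s0 : X f -> f s0 ->
  exists2 m, f m & tree_le s0 m /\ {in L, forall u, f u -> tree_le u m}.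
Proof.
move=> /paths_spaceE[_ f_lin] fs0; elim: L => [|u L [m fm [s0m mL]]].
  by exists s0 => //; split => //; exact: tree_le_refl.
have [fu|/negP nfu] := boolP (f u); last first.
  by exists m => //; split => // v; rewrite inE => /orP[/eqP-> /nfu|/mL].
case: (f_lin _ _ fu fm) => [um|mu].
  by exists m => //; split => // v; rewrite inE => /orP[/eqP->|/mL].
exists u => //; split; first exact: tree_le_trans s0m mu.
move=> v; rewrite inE => /orP[/eqP-> _|/mL vm /vm vm']; first exact: tree_le_refl.
exact: tree_le_trans vm' mu.
Qed.

(* [t] is the largest node of the path among [s0] and [L], topped with a new
   point above all points of the nodes of [L]. *)
Lemma path_agree_above (f : F) (L : seq (node A)) s0 : X f -> f s0 ->
  exists2 t, tree_le s0 t & forall g, cone t g -> {in L, g =1 f}.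
Proof.
move=> Xf fs0; have /paths_spaceE[f_down _] := Xf.
have [m fm [s0m mL]] := path_max_in L Xf fs0.
have [b Lb] : exists b, forall u x, u \in m :: L -> sval u x -> x < b.
  have [b bL] := countable_ub W_omega1 (bigcup_countable
    (finite_set_countable (finite_seq (m :: L))) (fun u _ => @node_countable _ _ A u)).
  by exists b => u x uL ux; apply: bL; exists u.
have [t [a [mt tE ba ma]]] := node_extend W_omega1 A_stationary m b.
exists t; first exact: tree_le_trans s0m mt.
move=> g [/paths_spaceE[g_down g_lin] gt] u uL.
have nua : ~ sval u a.
  move=> ua; have mL_u : u \in m :: L by rewrite inE uL orbT.
  by move: (Lb u a mL_u ua); rewrite ltNge (ltW ba).
apply/idP/idP => [gu|fu]; last exact: g_down gt (tree_le_trans (mL u uL fu) mt).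
case: (g_lin _ _ gu gt) => [[ut u_init]|[tu _]]; last first.
  by case: nua; apply: tu; rewrite tE; right.
apply: f_down fm _; split => [x ux|x y ux my yx].
  by move: (ut x ux); rewrite tE => -[//|xa]; case: nua; rewrite -xa.
by apply: u_init ux _ yx; rewrite tE; left.
Qed.

Lemma cone_in_nbhs (f : F) (P : set F) s0 : X f -> f s0 -> nbhs f P ->
  exists2 t, tree_le s0 t & cone t `<=` P.
Proof.
move=> Xf fs0 /nbhs_ptws_agree[L LP].
by have [t s0t tL] := path_agree_above L Xf fs0; exists t => // g /tL /LP.
Qed.

Lemma cone_escape (f : F) s : X f -> exists2 t, tree_le s t & ~ f t.
Proof.
move=> /paths_spaceE[_ f_lin].
have [t1 [t2 [st1 st2 [n12 n21]]]] := node_extend_incomparable W_omega1 A_stationary s.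
have [ft1|/negP] := boolP (f t1); last by exists t1.
have [ft2|/negP] := boolP (f t2); last by exists t2.
by case: (f_lin _ _ ft1 ft2).
Qed.

Definition avoids (u : node A * node A) (S : set (F * F)) :=
  forall z, (cone u.1 `*` cone u.2) z -> ~ S z.

Lemma avoids_le u v S : pair_le u v -> avoids u S -> avoids v S.
Proof. by move=> [uv1 uv2] uS z [/(cone_le uv1) z1 /(cone_le uv2) z2]; exact: uS. Qed.

(* Fusion yields a pair of nodes whose cones avoid every [S n]; the pair of
   their downsets is then not in the closure of the union. *)
Lemma avoidable_not_dense (S : nat -> set (F * F)) :
  (forall n, S n `<=` X `*` X) ->
  (forall n u, exists2 v, pair_le u v & avoids v (S n)) ->
  ~ (X `*` X `<=` closure (\bigcup_n S n)).
Proof.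
move=> SX S_avoid dense.
have [v _ v_avoids] := pair_fusion W_omega1 A_stationary
  (fun n u v uv => @avoids_le u v (S n) uv) S_avoid (node0 A, node0 A).
have [[Xz1 z1] [Xz2 z2]] := (downset_cone v.1, downset_cone v.2).
have z_nbhs : nbhs (downset v.1, downset v.2) [set z : F * F | z.1 v.1 /\ z.2 v.2].
  by apply: open_nbhs_nbhs; split; [exact: open_coord_pair|split].
have [w [[n _ Snw] [w1 w2]]] := dense (downset v.1, downset v.2) (conj Xz1 Xz2) _ z_nbhs.
have [Xw1 Xw2] := SX n w Snw.
exact: v_avoids n w (conj (conj Xw1 w1) (conj Xw2 w2)) Snw.
Qed.

Lemma nowhere_dense_avoidable N : nowhere_dense_in (X `*` X) N ->
  forall u, exists2 v, pair_le u v & avoids v N.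
Proof.
move=> [_ N_nwd] [s t].
have : ~ ([set z : F * F | z.1 s /\ z.2 t] `&` X `*` X `<=` closure N).
  move=> /(N_nwd _ (@open_coord_pair _ _ s t)) st0.
  have [[Xs ss] [Xt tt]] := (downset_cone s, downset_cone t).
  by move: st0 => /seteqP[/(_ (downset s, downset t)) + _]; apply; split; split.
move=> /existsNP[z /not_implyP[[[zs zt] [Xz1 Xz2]] /existsNP[B /not_implyP[]]]].
move=> [[P Q] [/= Pz Qz] PQB] NB.
have [s' ss' s'P] := cone_in_nbhs Xz1 zs Pz.
have [t' tt' t'Q] := cone_in_nbhs Xz2 zt Qz.
exists (s', t') => // w [w1 w2] Nw; apply: NB; exists w; split => //.
by apply: PQB; split; [exact: s'P|exact: t'Q].
Qed.

(* An isolating neighbourhood of a point of [D] contains a pair of cones; one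
   cone is then shrunk to exclude that point. *)
Lemma discrete_avoidable D : discrete_subspace D ->
  forall u, exists2 v, pair_le u v & avoids v D.
Proof.
move=> D_discr [s t].
have [[x [[Xx1 xs] [Xx2 xt]] Dx]|miss] := pselect (exists2 z, (cone s `*` cone t) z & D z);
  last first.
  exists (s, t); first by split; exact: tree_le_refl.
  by move=> z zst Dz; apply: miss; exists z.
have [V [oV [Vx VD]]] := D_discr x Dx.
have [[P Q] [/= Px Qx] PQV] := open_nbhs_nbhs (conj oV Vx).
have [s1 ss1 s1P] := cone_in_nbhs Xx1 xs Px.
have [t1 tt1 t1Q] := cone_in_nbhs Xx2 xt Qx.
have [s2 s12 ns2] := cone_escape s1 Xx1.
exists (s2, t1); first by split => //; exact: tree_le_trans ss1 s12.
move=> w [w1 w2] Dw; have /seteqP[/(_ w) wx _] := VD.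
have {}wx : w = x.
  by apply: wx; split => //; apply: PQV; split; [exact/s1P/(cone_le s12)|exact: t1Q].
by apply: ns2; rewrite -wx; case: w1.
Qed.

Lemma paths_square_not_nwd_separable : ~ nwd_separable (X `*` X).
Proof.
move=> [N [N_nwd [_ dense]]]; apply: (avoidable_not_dense (fun n => (N_nwd n).1)) dense.
by move=> n; exact: nowhere_dense_avoidable.
Qed.

Lemma paths_square_not_d_separable : ~ d_separable (X `*` X).
Proof.
move=> [D [D_discr [_ dense]]]; apply: (avoidable_not_dense (fun n => (D_discr n).1)) dense.
by move=> n; exact: discrete_avoidable (D_discr n).2.
Qed.

Section Corson.
Local Open Scope ring_scope.
Local Notation R := Rdefinitions.R.

Definition boolR (f : F) : {ptws node A -> R} := fun t => if f t then 1 else 0.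
Definition threshold (y : {ptws node A -> R}) : F := fun t => 2^-1 < y t.

Lemma threshold_boolR (f : F) : threshold (boolR f) = f.
Proof.
apply: funext => t; rewrite /threshold /boolR.
by case: (f t); apply/idP/idP => //; lra.
Qed.

Lemma boolR_continuous : continuous boolR.
Proof.
move=> f; apply: ptws_cvg => t U /nbhs_singleton Uft.
by apply: filterS (nbhs_coord f t) => g /= gt; rewrite /boolR gt.
Qed.

Lemma threshold_continuous (f : F) : {for boolR f, continuous threshold}.
Proof.
apply: ptws_cvg => t U /nbhs_singleton Uft.
have near_ft : \forall r \near boolR f t, (2^-1 < r) = (2^-1 < boolR f t).
  by apply: near_lt_const; rewrite /boolR; case: (f t); apply/eqP; lra.
have near_f : nbhs (boolR f)
    [set y : {ptws node A -> R} | threshold y t = threshold (boolR f) t]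
  := @proj_continuous _ (fun _ => R) t (boolR f) _ near_ft.
by apply: filterS near_f => y /= ->.
Qed.

Lemma paths_space_corson : corson_compact X.
Proof.
split; first exact: paths_space_compact.
exists (node A), boolR; split.
  by move=> f g _ _ fg; rewrite -(threshold_boolR f) fg threshold_boolR.
split.
  move=> _ [f [p p_path ->] <-].
  apply: (countable_subset (path_countable W_omega1 A_costationary p_path)) => t /=.
  by rewrite /boolR /charf; case: asboolP => // _ [].
split; first exact: continuous_subspaceT boolR_continuous.
exists threshold; split => [|f _]; last exact: threshold_boolR.
by apply: continuous_in_subspaceT => _ /set_mem[f _ <-]; exact: threshold_continuous.
Qed.

End Corson.
End Paths_space.

Theorem theorem2p7 (d : Order.disp_t) (W : orderType d) (A : set W) :
  is_omega1 W -> stationary A -> co_stationary A ->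
  corson_compact (paths_space A) /\
  ~ nwd_separable (paths_space A `*` paths_space A) /\
  ~ d_separable (paths_space A `*` paths_space A).
Proof.
move=> W_omega1 A_stationary A_costationary.
split; first exact: paths_space_corson W_omega1 A_costationary.
split; [exact: paths_square_not_nwd_separable W_omega1 A_stationary|
        exact: paths_square_not_d_separable W_omega1 A_stationary].
Qed.
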